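(* Let $(G,\precsim)$ be a compatible quasi-ordered abelian group and $H$ a $\precsim$-convex subgroup of $G$. The quasi-order induced on $G/H$ (defined by $g+H\precsim h+H\Leftrightarrow g-h\in H\vee(g-h\notin H\wedge g\precsim h)$) is valuational if and only if $G^o\subseteq H$. In particular, $G^o$ is the smallest convex subgroup of $G$ such that the induced quasi-order on $G/G^o$ is valuational.
   Context: A compatible quasi-ordered abelian group is an abelian group $G$ with a total quasi-order $\precsim$ (reflexive, transitive, any two elements comparable) such that, writing $a\sim b$ for $a\precsim b\wedge b\precsim a$: $(Q_1)$ $x\sim0\Rightarrow x=0$; $(Q_2)$ $x\precsim y\wedge y\not\sim z\Rightarrow x+z\precsim y+z$, for all $x,y,z$. With $cl(g)$ the $\sim$-class of $g$, $g$ is o-type if $cl(g)=\{g\}$ and $g$ is not of order $2$; $G^o$ is the set of o-type elements. $S$ is convex if $s,t\in S$, $s\precsim a\precsim t$ imply $a\in S$. A quasi-order $\precsim$ on an abelian group $A$ is valuational if there is a valuation $v$ on $A$ (a map $v:A\to\Gamma\cup\{\infty\}$, $\Gamma$ totally ordered, $\infty$ above $\Gamma$, with $v(a)=\infty\Leftrightarrow a=0$, $v(a+b)\ge\min(v(a),v(b))$, $v(-a)=v(a)$) such that $a\precsim b\Leftrightarrow v(b)\le v(a)$. *)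

From HB Require Import structures.
From mathcomp Require Import all_boot all_order all_algebra.
Set Implicit Arguments. Unset Strict Implicit. Unset Printing Implicit Defensive.
Import Order.TTheory GRing.Theory.
Local Open Scope ring_scope.

Section QOAG.
Variable G : zmodType.
Variable qle : G -> G -> Prop.

Definition qeq (a b : G) : Prop := qle a b /\ qle b a.

Definition compatible_qo : Prop :=
  (forall x, qle x x) /\
  (forall x y z, qle x y -> qle y z -> qle x z) /\
  (forall x y, qle x y \/ qle y x) /\
  (forall x, qeq x 0 -> x = 0) /\
  (forall x y z, qle x y -> ~ qeq y z -> qle (x + z) (y + z)).

Definition order2 (g : G) : Prop := g <> 0 /\ g + g = 0.

Definition otype (g : G) : Prop :=
  (forall h, qeq h g <-> h = g) /\ ~ order2 g.

Definition subgroup (H : G -> Prop) : Prop :=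
  H 0 /\ forall x y, H x -> H y -> H (x - y).

Definition convex (S : G -> Prop) : Prop :=
  forall s t a, S s -> S t -> qle s a -> qle a t -> S a.

(* induced quasi-order on G/H, expressed on representatives *)
Definition quot_qle (H : G -> Prop) (g h : G) : Prop :=
  H (g - h) \/ (~ H (g - h) /\ qle g h).

End QOAG.

(* Gamma ∪ {∞} encoded as option Gamma, None = ∞ *)
Definition le_inf d (Gam : orderType d) (x y : option Gam) : bool :=
  match x, y with
  | _, None => true
  | None, Some _ => false
  | Some a, Some b => (a <= b)%O
  end.

Definition min_inf d (Gam : orderType d) (x y : option Gam) : option Gam :=
  if le_inf x y then x else y.

(* A valuation on the quotient G/H, represented as an H-invariant map on G
   (i.e. a map on cosets), inducing the quasi-order [quot_qle qle H]. *)
Definition quot_valuational (G : zmodType) (qle : G -> G -> Prop)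
    (H : G -> Prop) : Prop :=
  exists (d : Order.disp_t) (Gam : orderType d) (v : G -> option Gam),
    (forall a b, H (a - b) -> v a = v b) /\
    (forall a, v a = None <-> H a) /\
    (forall a b, le_inf (min_inf (v a) (v b)) (v (a + b))) /\
    (forall a, v (- a) = v a) /\
    (forall a b, quot_qle qle H a b <-> le_inf (v b) (v a)).

(* An element outside G^o is nonzero and equivalent to its opposite; such an
   element is nonnegative and strictly above every o-type element, so G^o is a
   convex subgroup.  If the quotient by H is valuational, v(g) = v(-g) gives
   g + H ~ -g + H; for an o-type g this forces 2g in H, and convexity of H
   between 0 and 2g puts g in H.  Conversely, if G^o is contained in H, every
   element outside H is equivalent to its opposite and its class is unchanged
   by translation by H; the induced quasi-order is then a total preorder that
   satisfies the ultrametric and symmetry laws, and its classes, ordered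
   reversely with H sent to infinity, form the value set of a valuation. *)

From HB Require Import structures.
From mathcomp Require Import all_boot all_order all_algebra.
From Stdlib Require Import ClassicalEpsilon FunctionalExtensionality PropExtensionality.
Set Implicit Arguments. Unset Strict Implicit. Unset Printing Implicit Defensive.
Import Order.TTheory GRing.Theory.
Local Open Scope ring_scope.

Section ExtendedOrder.
Variables (d : Order.disp_t) (Gam : orderType d).
Implicit Types x y z : option Gam.

Lemma le_inf_refl x : le_inf x x.
Proof. by case: x => //= a; apply: lexx. Qed.

Lemma le_inf_trans x y z : le_inf x y -> le_inf y z -> le_inf x z.
Proof. by case: x y z => [x|] [y|] [z|] //=; apply: le_trans. Qed.

Lemma le_inf_total x y : le_inf x y || le_inf y x.
Proof. by case: x y => [x|] [y|] //=; apply: le_total. Qed.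

Lemma le_inf_anti x y : le_inf x y -> le_inf y x -> x = y.
Proof. by case: x y => [x|] [y|] //= xy yx; congr Some; apply/le_anti/andP. Qed.

Lemma min_inf_le x y z : le_inf x z \/ le_inf y z -> le_inf (min_inf x y) z.
Proof.
rewrite /min_inf; case: ifP => [xy|nxy] [xz|yz] //; first exact: le_inf_trans xy yz.
by move: (le_inf_total x y); rewrite nxy => /le_inf_trans; apply.
Qed.

End ExtendedOrder.

Section Subgroup.
Variables (G : zmodType) (H : G -> Prop).
Hypothesis H_sub : subgroup H.

Lemma subgroup0 : H 0. Proof. by case: H_sub. Qed.

Lemma subgroupB x y : H x -> H y -> H (x - y). Proof. by case: H_sub => _; apply. Qed.

Lemma subgroupN x : H x -> H (- x).
Proof. by move/(subgroupB subgroup0); rewrite sub0r. Qed.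

Lemma subgroupD x y : H x -> H y -> H (x + y).
Proof. by move=> hx /subgroupN /(subgroupB hx); rewrite opprK. Qed.

Lemma subgroupBr x y : H (x - y) -> H y -> H x.
Proof. by move=> hxy /(subgroupD hxy); rewrite subrK. Qed.

Lemma subgroupBC x y : H (x - y) -> H (y - x).
Proof. by move/subgroupN; rewrite opprB. Qed.

End Subgroup.

Section CompatibleQuasiOrder.
Variables (G : zmodType) (qle : G -> G -> Prop).
Hypothesis hG : compatible_qo qle.
Local Notation qeq := (qeq qle).

Lemma qle_refl x : qle x x. Proof. by case: hG. Qed.

Lemma qle_trans x y z : qle x y -> qle y z -> qle x z.
Proof. by case: hG => _ [h _]; apply: h. Qed.

Lemma qle_total x y : qle x y \/ qle y x. Proof. by case: hG => _ [_ [h _]]. Qed.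

Lemma qeq0 x : qeq x 0 -> x = 0. Proof. by case: hG => _ [_ [_ [h _]]]; apply: h. Qed.

Lemma qle_add x y z a b :
  qle x y -> ~ qeq y z -> a = x + z -> b = y + z -> qle a b.
Proof. by case: hG => _ [_ [_ [_ h]]] xy yz -> ->; apply: h. Qed.

Lemma qeq_refl x : qeq x x. Proof. by split; apply: qle_refl. Qed.

Lemma qeq_sym x y : qeq x y -> qeq y x. Proof. by case. Qed.

Lemma qle_anti0 x : qle x 0 -> qle 0 x -> x = 0.
Proof. by move=> h1 h2; apply: qeq0. Qed.

Lemma oppr_qge0 x : qle x 0 -> qle 0 (- x).
Proof.
move=> x_le0; have [->|x_neq0] := eqVneq x 0; first by rewrite oppr0; apply: qle_refl.
apply: (qle_add (z := - x) x_le0); rewrite ?subrr ?add0r //.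
case=> h1 h2; move/eqP: x_neq0; apply.
by rewrite -[x]opprK (qle_anti0 h2 h1) oppr0.
Qed.

Lemma oppr_qle0 x : qle 0 x -> ~ qeq x (- x) -> qle (- x) 0.
Proof. by move=> x_ge0 nx; apply: (qle_add (z := - x) x_ge0); rewrite ?add0r ?subrr. Qed.

Lemma qeqN_ge0 a : qeq a (- a) -> qle 0 a.
Proof. by case=> _ h; case: (qle_total 0 a) => // /oppr_qge0 /qle_trans; apply. Qed.

Lemma qeqN_nle0 a : qeq a (- a) -> a <> 0 -> ~ qle a 0.
Proof. by move=> ea a_neq0 /qle_anti0 /(_ (qeqN_ge0 ea)). Qed.

Lemma qeq_singleton x y : ~ qeq x (- x) -> qeq y x -> y = x.
Proof.
move=> nx [yx xy].
have ge0 : qle 0 (y - x).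
  apply: (qle_add (z := - x) xy); rewrite ?subrr //.
  by case=> h1 h2; apply: nx; split; [exact: qle_trans xy h1 | exact: qle_trans h2 yx].
have le0 : qle (y - x) 0 by apply: (qle_add (z := - x) yx); rewrite ?subrr.
by apply/eqP; rewrite -subr_eq0; apply/eqP; apply: qle_anti0.
Qed.

Lemma otypeE x : otype qle x <-> x = 0 \/ ~ qeq x (- x).
Proof.
split=> [[cl_x not2]|].
  have [->|x_neq0] := eqVneq x 0; [by left | right=> ex].
  apply: not2; split; first exact/eqP.
  have xN : - x = x by apply/cl_x/qeq_sym.
  by rewrite -{1}xN addNr.
case=> [->|nx]; split.
- by move=> h; split=> [/qeq0|->]; last exact: qeq_refl.
- by case.
- by move=> h; split=> [/(qeq_singleton nx)|->]; last exact: qeq_refl.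
- case=> _ /eqP; rewrite addr_eq0 => /eqP xN; apply: nx.
  by rewrite -{1}xN; apply: qeq_refl.
Qed.

Lemma not_otypeE a : ~ otype qle a -> a <> 0 /\ qeq a (- a).
Proof.
move=> na; split=> [a0|]; first by apply: na; apply/otypeE; left.
by apply: NNPP => nea; apply: na; apply/otypeE; right.
Qed.

Lemma otypeN x : otype qle x -> otype qle (- x).
Proof.
move/otypeE=> [->|nx]; apply/otypeE; first by left; rewrite oppr0.
by right; rewrite opprK => /qeq_sym.
Qed.

Lemma qeqN_gt_qge0 a x :
  qeq a (- a) -> a <> 0 -> qle 0 x -> ~ qeq x (- x) -> ~ qle a x.
Proof.
move=> ea a_neq0 x_ge0 nx a_le_x; have a_nle0 := qeqN_nle0 ea a_neq0.
have Nx_le0 := oppr_qle0 x_ge0 nx.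
have Na_le_x : qle (- a) x by apply: qle_trans a_le_x; case: ea.
have Nax_le0 : qle (- a - x) 0 by apply: (qle_add (z := - x) Na_le_x); rewrite ?subrr.
have Nx_le_Nax : qle (- x) (- a - x).
  apply: (qle_add (z := - x) (qle_trans (qeqN_ge0 ea) (proj1 ea))); rewrite ?add0r //.
  by case=> h _; apply: a_nle0; apply: qle_trans (qle_trans (proj1 ea) h) Nx_le0.
have Nxa_le_Nx : qle (- x + a) (- x).
  apply: (qle_add (z := a) Nx_le_Nax) => //; last by rewrite addrAC addNr add0r.
  by case=> _ h; apply: a_nle0; apply: qle_trans h Nax_le0.
apply: a_nle0; apply: (qle_add (z := x) Nxa_le_Nx); rewrite ?addNr //.
- by move/qeq_sym.
- by rewrite addrAC addNr add0r.
Qed.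

Lemma not_otype_gt a x : ~ otype qle a -> otype qle x -> ~ qle a x.
Proof.
move=> /not_otypeE [a_neq0 ea] /otypeE [->|nx]; first exact: qeqN_nle0.
case: (qle_total 0 x) => [x_ge0|x_le0]; first exact: qeqN_gt_qge0.
by move/qle_trans/(_ x_le0); apply: qeqN_nle0.
Qed.

Lemma otypeD x y : otype qle x -> otype qle y -> otype qle (x + y).
Proof.
move=> ox oy; apply: NNPP => ns; have [_ es] := not_otypeE ns.
have below b : otype qle b -> qle b (x + y).
  by move=> ob; case: (qle_total b (x + y)) => // /(not_otype_gt ns ob).
have [y_lt N_lt] := (not_otype_gt ns oy, not_otype_gt ns (otypeN oy)).
have x_ge0 : qle 0 x.
  apply: (qle_add (z := - y) (below _ oy)); rewrite ?subrr ?addrK //.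
  by case=> /N_lt.
have Nx_ge0 : qle 0 (- x).
  apply: (qle_add (z := y) (qle_trans (below _ (otypeN oy)) (proj1 es))).
  - by case=> h _; apply: y_lt; apply: qle_trans (proj1 es) h.
  - by rewrite addNr.
  - by rewrite opprD subrK.
move/otypeE: ox => [x0|nx]; first by apply: ns; rewrite x0 add0r.
have := oppr_qle0 Nx_ge0; rewrite opprK => /(_ (fun e => nx (qeq_sym e))).
by move/qle_anti0/(_ x_ge0) => x0; apply: nx; rewrite x0 oppr0; apply: qeq_refl.
Qed.

Lemma otype_subgroup : subgroup (otype qle).
Proof.
split; first by apply/otypeE; left.
by move=> x y ox oy; apply: otypeD => //; apply: otypeN.
Qed.

Lemma otype_convex : convex qle (otype qle).
Proof. by move=> s t a _ ot _ a_le_t; apply: NNPP => na; apply: (not_otype_gt na ot). Qed.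

Lemma convex_half (H : G -> Prop) g :
  H 0 -> convex qle H -> ~ qeq g (- g) -> H (g + g) -> H g.
Proof.
move=> H0 H_conv ng H2g.
have g_neq0 : g <> 0 by move=> g0; apply: ng; rewrite g0 oppr0; apply: qeq_refl.
case: (qle_total g 0) => [g_le0|g_ge0].
  apply: (H_conv _ _ g H2g H0) => //.
  by apply: (qle_add (z := g) g_le0); rewrite ?add0r // => /qeq_sym /qeq0.
apply: (H_conv _ _ g H0 H2g) => //.
apply: (qle_add (z := g + g) (oppr_qle0 g_ge0 ng)); rewrite ?add0r ?addKr //.
move=> /qeq_sym /qeq0 /eqP; rewrite addr_eq0 => /eqP gN.
by apply: ng; rewrite -{1}gN; apply: qeq_refl.
Qed.

Lemma otype_sub_of_valuational (H : G -> Prop) :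
  subgroup H -> convex qle H -> quot_valuational qle H ->
  forall g, otype qle g -> H g.
Proof.
move=> H_sub H_conv [d [Gam [v [_ [_ [_ [vN v_qle]]]]]]] g /otypeE [->|ng].
  exact: subgroup0.
apply: (convex_half (subgroup0 H_sub) H_conv ng).
have le_gNg : quot_qle qle H g (- g) by apply/v_qle; rewrite vN le_inf_refl.
have le_Ngg : quot_qle qle H (- g) g by apply/v_qle; rewrite vN le_inf_refl.
case: le_gNg => [|[_ g_le]]; first by rewrite opprK.
case: le_Ngg => [/(subgroupN H_sub)|[_ Ng_le]]; first by rewrite opprB opprK.
by case: ng; split.
Qed.

End CompatibleQuasiOrder.

Definition asbool (P : Prop) : bool :=
  if excluded_middle_informative P then true else false.

Lemma asboolP (P : Prop) : reflect P (asbool P).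
Proof. by rewrite /asbool; case: excluded_middle_informative => h; constructor. Qed.

Fact preorder_display : Order.disp_t. Proof. exact: Order.Disp tt tt. Qed.

Section TotalPreorderRepresentation.
Variables (T : choiceType) (R : T -> T -> Prop).
Hypotheses (R_refl : forall a, R a a)
  (R_trans : forall a b c, R a b -> R b c -> R a c)
  (R_total : forall a b, R a b \/ R b a).

Definition class_rep (a : T) : T := epsilon (inhabits a) (fun b => R a b /\ R b a).

Lemma class_repP a : R a (class_rep a) /\ R (class_rep a) a.
Proof. by apply: (epsilon_spec (inhabits a) (fun b => R a b /\ R b a)); exists a. Qed.

Lemma class_rep_eq a b : R a b -> R b a -> class_rep a = class_rep b.
Proof.
move=> ab ba; rewrite /class_rep (proof_irrelevance _ (inhabits a) (inhabits b)).
congr epsilon; apply: functional_extensionality => c.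
apply: propositional_extensionality.
by split=> -[u1 u2]; split; eauto.
Qed.

Lemma class_rep_id a : class_rep (class_rep a) = class_rep a.
Proof. by case: (class_repP a) => h1 h2; apply: class_rep_eq. Qed.

Definition preorder_class : Type := {x : T | class_rep x == x}.
HB.instance Definition _ := Choice.on preorder_class.

Definition class_le (x y : preorder_class) : bool := asbool (R (val x) (val y)).

Lemma class_le_refl : reflexive class_le.
Proof. by move=> x; apply/asboolP. Qed.

Lemma class_le_anti : antisymmetric class_le.
Proof.
move=> [x ex] [y ey] /andP [/asboolP xy /asboolP yx]; apply: val_inj => /=.
by rewrite -(eqP ex) -(eqP ey); apply: class_rep_eq.
Qed.

Lemma class_le_trans : transitive class_le.
Proof. by move=> y x z /asboolP xy /asboolP yz; apply/asboolP; apply: R_trans yz. Qed.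

Lemma class_le_total : total class_le.
Proof.
by move=> x y; rewrite /class_le; case: (R_total (val x) (val y)) => /asboolP ->;
  rewrite ?orbT.
Qed.

HB.instance Definition _ := Order.Le_isPOrder.Build preorder_display preorder_class
  class_le_refl class_le_anti class_le_trans.
HB.instance Definition _ := Order.POrder_isTotal.Build preorder_display preorder_class
  class_le_total.

Definition class_of (a : T) : preorder_class :=
  exist (fun x => class_rep x == x) (class_rep a) (introT eqP (class_rep_id a)).

Lemma class_of_le a b : R a b <-> (class_of a <= class_of b)%O.
Proof.
have [[a1 a2] [b1 b2]] := (class_repP a, class_repP b).
by split=> [ab|/asboolP /= ab]; [apply/asboolP => /=; eauto | eauto].
Qed.

Lemma total_preorder_representable :
  exists (d : Order.disp_t) (Gam : orderType d) (f : T -> Gam),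
    forall a b, R a b <-> (f a <= f b)%O.
Proof. by exists _, _, class_of; apply: class_of_le. Qed.

End TotalPreorderRepresentation.

Section ValuationOfPreorder.
Variables (G : zmodType) (Q : G -> G -> Prop) (H : G -> Prop).
Hypotheses (H_sub : subgroup H)
  (Q_refl : forall a, Q a a)
  (Q_trans : forall a b c, Q a b -> Q b c -> Q a c)
  (Q_total : forall a b, Q a b \/ Q b a)
  (Q_coset : forall a b, H (a - b) -> Q a b)
  (Q_bottom : forall a b, H a -> Q a b)
  (Q_bottomP : forall a b, H b -> Q a b -> H a)
  (Q_oppr : forall a, Q a (- a))
  (Q_add : forall a b, Q (a + b) a \/ Q (a + b) b).

Lemma preorder_valuation :
  exists (d : Order.disp_t) (Gam : orderType d) (v : G -> option Gam),
    (forall a b, H (a - b) -> v a = v b) /\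
    (forall a, v a = None <-> H a) /\
    (forall a b, le_inf (min_inf (v a) (v b)) (v (a + b))) /\
    (forall a, v (- a) = v a) /\
    (forall a b, Q a b <-> le_inf (v b) (v a)).
Proof.
have [d [Gam [f f_le]]] := @total_preorder_representable G (fun a b => Q b a)
  Q_refl (fun a b c ab bc => Q_trans bc ab) (fun a b => Q_total b a).
pose v a := if asbool (H a) then None else Some (f a).
have v_le a b : Q a b <-> le_inf (v b) (v a).
  rewrite /v; case: asboolP => hb; case: asboolP => ha //=.
  - by split=> // _; apply: Q_bottom.
  - by split=> // /(Q_bottomP hb).
  - by split=> // _; apply: Q_bottom.
exists d, Gam, v; split; last split; last split; last split.
- move=> a b hab; apply: le_inf_anti; apply/v_le/Q_coset => //.
  exact: subgroupBC.
- by move=> a; rewrite /v; case: asboolP.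
- by move=> a b; apply: min_inf_le; case: (Q_add a b) => /v_le; [left|right].
- move=> a; apply: le_inf_anti; apply/v_le => //.
  by rewrite -{2}[a]opprK.
- exact: v_le.
Qed.

End ValuationOfPreorder.

Section QuotientPreorder.
Variables (G : zmodType) (qle : G -> G -> Prop).
Hypothesis hG : compatible_qo qle.
Variable H : G -> Prop.
Hypotheses (H_sub : subgroup H) (H_conv : convex qle H)
  (H_otype : forall g, otype qle g -> H g).
Local Notation qeq := (qeq qle).
Local Notation Q := (quot_qle qle H).

Lemma notH_qeqN a : ~ H a -> qeq a (- a).
Proof. by move=> na; case: (not_otypeE hG (fun oa => na (H_otype oa))). Qed.

Lemma notH_neq0 a : ~ H a -> a <> 0.
Proof. by move=> na a0; apply: na; rewrite a0; apply: subgroup0. Qed.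

Lemma notH_gt h a : H h -> ~ H a -> ~ qle a h.
Proof.
move=> hh na a_le_h; have a_ge0 := qeqN_ge0 hG (notH_qeqN na).
by apply: na; apply: (H_conv (subgroup0 H_sub) hh a_ge0 a_le_h).
Qed.

Lemma H_le_notH h a : H h -> ~ H a -> qle h a.
Proof. by move=> hh na; case: (qle_total hG h a) => // /(notH_gt hh na). Qed.

Lemma notH_addH u h : ~ H u -> H h -> ~ H (u + h).
Proof. by move=> nu hh /(subgroupB H_sub)/(_ hh); rewrite addrK. Qed.

Lemma notH_oppr a : ~ H a -> ~ H (- a).
Proof. by move=> na /(subgroupN H_sub); rewrite opprK. Qed.

Lemma qle_addH_le0 h u : H h -> qle h 0 -> ~ H u -> qle (u + h) u.
Proof.
move=> hh h_le0 nu; apply: (qle_add hG (z := u) h_le0).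
- by move=> e; apply: (notH_neq0 nu); apply: (qeq0 hG); apply: qeq_sym.
- exact: addrC.
- by rewrite add0r.
Qed.

Lemma qle_addH_ge0 h u : H h -> qle 0 h -> ~ H u -> qle u (u + h).
Proof.
move=> hh h_ge0 nu; apply: (qle_add hG (z := u) h_ge0).
- by case=> _ /(notH_gt hh nu).
- by rewrite add0r.
- exact: addrC.
Qed.

Lemma qleN_notH a b : ~ H a -> ~ H b -> qle (- a) (- b) -> qle a b.
Proof.
move=> na nb Nab; have [[a_le _] [_ b_ge]] := (notH_qeqN na, notH_qeqN nb).
exact: (qle_trans hG (qle_trans hG a_le Nab) b_ge).
Qed.

Lemma qeq_addH u h : ~ H u -> H h -> qeq (u + h) u.
Proof.
move=> nu hh; have nuh := notH_addH nu hh; have nNuh := notH_oppr nuh.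
have NuhhE : - (u + h) + h = - u by rewrite opprD addrNK.
case: (qle_total hG h 0) => [h_le0|h_ge0]; split.
- exact: qle_addH_le0.
- by apply: qleN_notH nu nuh _; rewrite -NuhhE; apply: qle_addH_le0.
- by apply: qleN_notH nuh nu _; rewrite -NuhhE; apply: qle_addH_ge0.
- exact: qle_addH_ge0.
Qed.

Lemma qeq_coset a a' : ~ H a -> H (a' - a) -> qeq a' a.
Proof. by move=> na /(qeq_addH na); rewrite addrC subrK. Qed.

Lemma qle_cosetl a a' b : H (a' - a) -> ~ H (a - b) -> qle a b -> qle a' b.
Proof.
move=> ha'a nab a_le_b; have [ha|na] := classic (H a).
  apply: H_le_notH; first exact: (subgroupBr H_sub ha'a ha).
  by move=> hb; apply: nab; apply: subgroupB.
by case: (qeq_coset na ha'a) => a'_le _; exact: (qle_trans hG a'_le a_le_b).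
Qed.

Lemma qle_cosetr a b b' : H (b' - b) -> ~ H (a - b) -> qle a b -> qle a b'.
Proof.
move=> hb'b nab a_le_b; have [hb|nb] := classic (H b).
  by case: (notH_gt hb _ a_le_b) => ha; apply: nab; apply: subgroupB.
by case: (qeq_coset nb hb'b) => _ b_le; exact: (qle_trans hG a_le_b b_le).
Qed.

Lemma quot_qleE a b : Q a b <-> H (a - b) \/ qle a b.
Proof.
split=> [[|[]]|[hab|a_le_b]]; [by left | by right | by left |].
by have [|] := classic (H (a - b)); [left | right].
Qed.

Lemma quot_qle_refl a : Q a a.
Proof. by apply/quot_qleE; left; rewrite subrr; apply: subgroup0. Qed.

Lemma quot_qle_total a b : Q a b \/ Q b a.
Proof. by case: (qle_total hG a b) => ?; [left|right]; apply/quot_qleE; right. Qed.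

Lemma quot_qle_trans a b c : Q a b -> Q b c -> Q a c.
Proof.
move=> /quot_qleE [hab|a_le_b] /quot_qleE [hbc|b_le_c]; apply/quot_qleE.
- by left; rewrite -(subrK b a) -addrA; apply: subgroupD.
- have [|nac] := classic (H (a - c)); [by left | right].
  apply: (qle_cosetl hab _ b_le_c) => hbc; apply: nac.
  by rewrite -(subrK b a) -addrA; apply: subgroupD.
- have [|nac] := classic (H (a - c)); [by left | right].
  apply: (qle_cosetr (subgroupBC H_sub hbc) _ a_le_b) => hab; apply: nac.
  by rewrite -(subrK b a) -addrA; apply: subgroupD.
- by right; exact: (qle_trans hG a_le_b b_le_c).
Qed.

Lemma quot_qle_bottom a b : H a -> Q a b.
Proof.
move=> ha; apply/quot_qleE; have [hb|nb] := classic (H b).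
  by left; apply: subgroupB.
by right; apply: H_le_notH.
Qed.

Lemma quot_qle_bottomP a b : H b -> Q a b -> H a.
Proof.
move=> hb /quot_qleE [hab|a_le_b]; first exact: (subgroupBr H_sub hab hb).
by apply: NNPP => na; apply: notH_gt hb na a_le_b.
Qed.

Lemma quot_qle_oppr a : Q a (- a).
Proof.
apply/quot_qleE; have [ha|na] := classic (H a); last by right; case: (notH_qeqN na).
by left; rewrite opprK; apply: subgroupD.
Qed.

Lemma quot_qle_add a b : Q (a + b) a \/ Q (a + b) b.
Proof.
have [hb|nb] := classic (H b); first by left; left; rewrite addrC addKr.
have [ha|na] := classic (H a); first by right; left; rewrite addrK.
have [hab|nab] := classic (H (a + b)); first by left; apply: quot_qle_bottom.
have [ab_le_a|ab_gt_a] := classic (qle (a + b) a); first by left; apply/quot_qleE; right.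
have [ab_le_b|ab_gt_b] := classic (qle (a + b) b); first by right; apply/quot_qleE; right.
have [[ab_le_Nab _] [_ Na_le_a]] := (notH_qeqN nab, notH_qeqN na).
have below x : ~ qle (a + b) x -> qle x (a + b) by case: (qle_total hG x (a + b)).
have a_le_Nab := qle_trans hG (below _ ab_gt_a) ab_le_Nab.
have ab_le_Na : qle (a + b) (- a).
  apply: (qle_add hG (z := b) a_le_Nab) => //; last by rewrite opprD subrK.
  by case=> Nab_le_b _; apply: ab_gt_b; exact: (qle_trans hG ab_le_Nab Nab_le_b).
by case: ab_gt_a; exact: (qle_trans hG ab_le_Na Na_le_a).
Qed.

Lemma quot_valuational_of_otype_sub : quot_valuational qle H.
Proof.
exact: (preorder_valuation H_sub quot_qle_refl quot_qle_trans quot_qle_total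
  (fun a b => @or_introl _ _) quot_qle_bottom quot_qle_bottomP quot_qle_oppr
  quot_qle_add).
Qed.

End QuotientPreorder.

Theorem mainTheorem10 (G : zmodType) (qle : G -> G -> Prop)
  (hG : compatible_qo qle) :
  (forall H : G -> Prop, subgroup H -> convex qle H ->
     (quot_valuational qle H <-> (forall g, otype qle g -> H g))) /\
  (subgroup (otype qle) /\ convex qle (otype qle) /\
   quot_valuational qle (otype qle) /\
   forall H : G -> Prop, subgroup H -> convex qle H ->
     quot_valuational qle H -> forall g, otype qle g -> H g).
Proof.
have [o_sub o_conv] := (otype_subgroup hG, otype_convex hG).
split=> [H H_sub H_conv|]; first split.
- exact: otype_sub_of_valuational.
- exact: quot_valuational_of_otype_sub.
split; first exact: o_sub.
split; first exact: o_conv.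
split; first exact: quot_valuational_of_otype_sub.
exact: otype_sub_of_valuational.
Qed.
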